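(* Let $F$ be any finite set of points with rational coordinates lying on the unit circle $x^2+y^2=1$ (for instance, $100$ such points), and consider the configuration consisting of the points of $F$ and the line $y=x$ (the circle itself is not part of the configuration). Then the two intersection points $\pm\left(\frac{\sqrt2}{2},\frac{\sqrt2}{2}\right)$ of the line $y=x$ with the unit circle are non-constructible by a straightedge from this configuration.
   Context: A configuration is a finite collection of points $a_i\in\mathbb R^2$, lines $\ell_i\subset\mathbb R^2$ and curves $\gamma_i\subset\mathbb R^2$. Given a configuration $\{a_i,\ell_i,\gamma_i\}$, call a set $\Sigma\subset\mathbb R^2$ admissible if: (1) $\Sigma$ is dense in $\mathbb R^2$; (2) every $a_i$ lies in $\Sigma$; (3) for any $b_1,b_2,b_3,b_4\in\Sigma$ with $b_1\neq b_2$, $b_3\ne b_4$, if the lines $b_1b_2$ and $b_3b_4$ are distinct and not parallel, then their intersection point lies in $\Sigma$; (4) for any distinct $b_1,b_2\in\Sigma$, every isolated intersection point of the line $b_1b_2$ with any of the lines $\ell_i$ or curves $\gamma_j$ lies in $\Sigma$. A point $a$ is non-constructible (by a straightedge) from the configuration if there exists an admissible set $\Sigma$ with $a\notin\Sigma$. *)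

From Stdlib Require Import Reals List QArith Qreals.
Open Scope R_scope.

Definition point : Type := (R * R)%type.

Definition cross (a b c d : point) : R :=
  (fst b - fst a) * (snd d - snd c) - (snd b - snd a) * (fst d - fst c).

(* p lies on the line through a and b (meaningful when a <> b) *)
Definition on_line2 (a b p : point) : Prop := cross a b a p = 0.

Record eqline : Type := mkEqline { lu : R; lv : R; lw : R; lnz : lu <> 0 \/ lv <> 0 }.
Definition on_eqline (l : eqline) (p : point) : Prop :=
  lu l * fst p + lv l * snd p = lw l.

Record config : Type := mkConfig {
  cpoints : list point;
  clines  : list eqline;
  ccurves : list (point -> Prop) }.

Definition dist2 (p q : point) : R := (fst p - fst q)^2 + (snd p - snd q)^2.

Definition isolated_in (S : point -> Prop) (p : point) : Prop :=
  S p /\ exists eps, 0 < eps /\ forall q, S q -> dist2 p q < eps -> q = p.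

Definition admissible (C : config) (Sig : point -> Prop) : Prop :=
  (forall x eps, 0 < eps -> exists p, Sig p /\ dist2 p x < eps) /\
  (forall a, In a (cpoints C) -> Sig a) /\
  (forall b1 b2 b3 b4 p, Sig b1 -> Sig b2 -> Sig b3 -> Sig b4 ->
     b1 <> b2 -> b3 <> b4 -> cross b1 b2 b3 b4 <> 0 ->
     on_line2 b1 b2 p -> on_line2 b3 b4 p -> Sig p) /\
  (forall b1 b2 p, Sig b1 -> Sig b2 -> b1 <> b2 ->
     ((exists l, In l (clines C) /\
         isolated_in (fun q => on_line2 b1 b2 q /\ on_eqline l q) p) \/
      (exists g, In g (ccurves C) /\
         isolated_in (fun q => on_line2 b1 b2 q /\ g q) p)) ->
     Sig p).

Definition non_constructible (C : config) (a : point) : Prop :=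
  exists Sig, admissible C Sig /\ ~ Sig a.

Definition is_rational (x : R) : Prop := exists q : Q, x = Q2R q.

Lemma diag_nz : (1 <> 0 \/ -1 <> 0)%R.
Proof. left; exact R1_neq_R0. Qed.

(* the line y = x, i.e. 1*x + (-1)*y = 0 *)
Definition diag_line : eqline := mkEqline 1 (-1) 0 diag_nz.

(* The rational points of the plane form an admissible set.  They are dense;
   a line through two rational points has a rational equation, as does y = x;
   and two non-parallel lines with rational equations meet in a rational point
   by Cramer's rule, while two parallel lines never meet in an isolated point.
   Since √2 is irrational, ±(√2/2, √2/2) lies outside this set.  The circle is
   not part of the configuration, so only the rationality of F is used. *)

From Stdlib Require Import Reals List QArith Qreals Lra Lia ZArith.
Open Scope R_scope.

Lemma is_rational_IZR z : is_rational (IZR z).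
Proof. exists (inject_Z z); unfold Q2R; simpl; field. Qed.

Lemma is_rational_plus x y : is_rational x -> is_rational y -> is_rational (x + y).
Proof. intros [a ->] [b ->]; exists (a + b)%Q; now rewrite Q2R_plus. Qed.

Lemma is_rational_opp x : is_rational x -> is_rational (- x).
Proof. intros [a ->]; exists (- a)%Q; now rewrite Q2R_opp. Qed.

Lemma is_rational_minus x y : is_rational x -> is_rational y -> is_rational (x - y).
Proof. intros [a ->] [b ->]; exists (a - b)%Q; now rewrite Q2R_minus. Qed.

Lemma is_rational_mult x y : is_rational x -> is_rational y -> is_rational (x * y).
Proof. intros [a ->] [b ->]; exists (a * b)%Q; now rewrite Q2R_mult. Qed.

Lemma is_rational_div x y : is_rational x -> is_rational y -> y <> 0 -> is_rational (x / y).
Proof.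
  intros [a ->] [b ->] Hb; exists (a / b)%Q; rewrite Q2R_div; [reflexivity|].
  intro E; apply Hb; rewrite (Qeq_eqR _ _ E); unfold Q2R; simpl; ring.
Qed.

Ltac solve_rational :=
  repeat first [ assumption | apply is_rational_IZR
               | apply is_rational_plus | apply is_rational_minus
               | apply is_rational_mult | apply is_rational_opp ].

Lemma Z_even_square n : Z.even (n * n) = Z.even n.
Proof. now rewrite Z.even_mul, Bool.orb_diag. Qed.

Lemma Z_square_neq_twice_square n d : (0 < d)%Z -> (n * n <> 2 * (d * d))%Z.
Proof.
  revert n; induction d as [d IH] using (well_founded_induction (Z.lt_wf 0)).
  intros n Hd Hnd.
  assert (Hn : Z.even n = true).
  { rewrite <- Z_even_square, Hnd, Z.even_mul; reflexivity. }
  apply Z.even_spec in Hn as [j ->].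
  assert (Hd2 : Z.even d = true).
  { rewrite <- Z_even_square; replace (d * d)%Z with (2 * (j * j))%Z by nia.
    rewrite Z.even_mul; reflexivity. }
  apply Z.even_spec in Hd2 as [k ->].
  apply (IH k) with j; nia.
Qed.

Lemma sqrt2_irrational : ~ is_rational (sqrt 2).
Proof.
  intros [[n d] Hq]; unfold Q2R in Hq; simpl in Hq.
  assert (Hd : 0 < IZR (Z.pos d)) by (apply IZR_lt; lia).
  assert (Hn : IZR n = sqrt 2 * IZR (Z.pos d)) by (rewrite Hq; field; lra).
  assert (Hsq : IZR (n * n) = IZR (2 * (Z.pos d * Z.pos d))).
  { rewrite !mult_IZR, Hn.
    replace (sqrt 2 * IZR (Z.pos d) * (sqrt 2 * IZR (Z.pos d)))
      with (sqrt 2 * sqrt 2 * (IZR (Z.pos d) * IZR (Z.pos d))) by ring.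
    rewrite sqrt_sqrt; lra. }
  apply eq_IZR in Hsq; revert Hsq; apply Z_square_neq_twice_square; lia.
Qed.

Lemma half_sqrt2_irrational : ~ is_rational (sqrt 2 / 2).
Proof.
  intros H; apply sqrt2_irrational.
  replace (sqrt 2) with (sqrt 2 / 2 * IZR 2) by field.
  solve_rational.
Qed.

Definition rational_point (p : point) : Prop :=
  is_rational (fst p) /\ is_rational (snd p).

Definition rational_eqline (l : eqline) : Prop :=
  is_rational (lu l) /\ is_rational (lv l) /\ is_rational (lw l).

Lemma rational_approx r eps : 0 < eps -> exists q, is_rational q /\ Rabs (q - r) < eps.
Proof.
  intros Heps; set (N := IZR (up (/ eps))).
  assert (HN : / eps < N) by apply archimed.
  assert (Heps_pos : 0 < / eps) by now apply Rinv_0_lt_compat.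
  assert (HNeps : / N < eps).
  { rewrite <- (Rinv_inv eps); apply Rinv_lt_contravar; nra. }
  destruct (archimed (r * N)) as [Hup1 Hup2].
  exists (IZR (up (r * N)) / N); split.
  - apply is_rational_div; [apply is_rational_IZR | apply is_rational_IZR | lra].
  - assert (E : IZR (up (r * N)) / N - r = (IZR (up (r * N)) - r * N) * / N)
      by (field; lra).
    assert (0 < / N) by (apply Rinv_0_lt_compat; lra).
    rewrite E, Rabs_pos_eq by nra; nra.
Qed.

Lemma rational_point_dense x eps :
  0 < eps -> exists p, rational_point p /\ dist2 p x < eps.
Proof.
  intros Heps; set (delta := Rmin 1 (eps / 2)).
  assert (Hdelta : 0 < delta) by (apply Rmin_glb_lt; lra).
  assert (delta <= 1) by apply Rmin_l.
  assert (delta <= eps / 2) by apply Rmin_r.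
  destruct (rational_approx (fst x) delta Hdelta) as [q1 [Hq1 E1]].
  destruct (rational_approx (snd x) delta Hdelta) as [q2 [Hq2 E2]].
  exists (q1, q2); split; [now split|].
  assert (S1 : (q1 - fst x) ^ 2 < delta * delta).
  { rewrite <- (pow2_abs (q1 - fst x)); pose proof (Rabs_pos (q1 - fst x)); nra. }
  assert (S2 : (q2 - snd x) ^ 2 < delta * delta).
  { rewrite <- (pow2_abs (q2 - snd x)); pose proof (Rabs_pos (q2 - snd x)); nra. }
  unfold dist2; cbn [fst snd]; nra.
Qed.

Definition eqline_det (l1 l2 : eqline) : R := lu l1 * lv l2 - lu l2 * lv l1.

Lemma eqline_intersection_rational l1 l2 p :
  rational_eqline l1 -> rational_eqline l2 -> eqline_det l1 l2 <> 0 ->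
  on_eqline l1 p -> on_eqline l2 p -> rational_point p.
Proof.
  destruct l1 as [a1 b1 c1 nz1], l2 as [a2 b2 c2 nz2], p as [x y].
  unfold rational_eqline, eqline_det, on_eqline; simpl.
  intros (Ha1 & Hb1 & Hc1) (Ha2 & Hb2 & Hc2) Hdet E1 E2.
  assert (Hx : x = (c1 * b2 - c2 * b1) / (a1 * b2 - a2 * b1))
    by (rewrite <- E1, <- E2; field; exact Hdet).
  assert (Hy : y = (a1 * c2 - a2 * c1) / (a1 * b2 - a2 * b1))
    by (rewrite <- E1, <- E2; field; exact Hdet).
  rewrite Hx, Hy.
  split; apply is_rational_div; auto; solve_rational.
Qed.

Lemma isolated_in_iff (S T : point -> Prop) p :
  (forall q, S q <-> T q) -> isolated_in S p -> isolated_in T p.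
Proof.
  intros HST [HS [eps [Heps Hiso]]]; split; [now apply HST|].
  exists eps; split; [exact Heps|]; intros q Hq; apply Hiso, HST, Hq.
Qed.

(* Parallel lines through a common point coincide, so the intersection contains
   the points p + t (lv l2, - lu l2) arbitrarily close to p. *)
Lemma isolated_eqline_intersection_det l1 l2 p :
  isolated_in (fun q => on_eqline l1 q /\ on_eqline l2 q) p -> eqline_det l1 l2 <> 0.
Proof.
  destruct l1 as [a1 b1 c1 nz1], l2 as [a2 b2 c2 nz2], p as [x y].
  unfold isolated_in, eqline_det, on_eqline; simpl.
  intros [[E1 E2] [eps [Heps Hiso]]] Hdet.
  set (K := a2 ^ 2 + b2 ^ 2).
  assert (HK : 0 < K) by (unfold K; destruct nz2; nra).
  set (t := eps / (2 * (K + eps))).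
  assert (Ht : 0 < t) by (apply Rdiv_lt_0_compat; lra).
  assert (Ht_def : 2 * t * (K + eps) = eps) by (unfold t; field; lra).
  assert (Hq : (x + t * b2, y - t * a2) = (x, y)).
  { apply Hiso; simpl; [split|].
    - replace (a1 * (x + t * b2) + b1 * (y - t * a2))
        with (a1 * x + b1 * y + t * (a1 * b2 - a2 * b1)) by ring.
      rewrite Hdet; lra.
    - replace (a2 * (x + t * b2) + b2 * (y - t * a2)) with (a2 * x + b2 * y) by ring.
      exact E2.
    - unfold dist2; cbn [fst snd].
      replace ((x - (x + t * b2)) ^ 2 + (y - (y - t * a2)) ^ 2) with (t * t * K)
        by (unfold K; ring).
      assert (t <= 1) by nra.
      assert (t * t * K <= t * K) by (apply Rmult_le_compat_r; nra).
      nra. }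
  injection Hq as Hx Hy.
  destruct nz2 as [Ha | Hb]; [apply Ha | apply Hb]; nra.
Qed.

Lemma points_neq_direction (b1 b2 : point) :
  b1 <> b2 -> snd b1 - snd b2 <> 0 \/ fst b2 - fst b1 <> 0.
Proof.
  destruct b1 as [x1 y1], b2 as [x2 y2]; simpl; intros Hne.
  destruct (Req_dec x1 x2) as [-> | Hx]; [left | right]; [|lra].
  intro Hy; apply Hne; f_equal; lra.
Qed.

Definition line_through {b1 b2 : point} (H : b1 <> b2) : eqline :=
  mkEqline (snd b1 - snd b2) (fst b2 - fst b1)
    ((fst b2 - fst b1) * snd b1 - (snd b2 - snd b1) * fst b1)
    (points_neq_direction b1 b2 H).

Lemma on_line2_through b1 b2 (H : b1 <> b2) q :
  on_line2 b1 b2 q <-> on_eqline (line_through H) q.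
Proof. unfold on_line2, on_eqline, cross; simpl; split; intros; lra. Qed.

Lemma line_through_rational b1 b2 (H : b1 <> b2) :
  rational_point b1 -> rational_point b2 -> rational_eqline (line_through H).
Proof.
  intros [] []; unfold rational_eqline; simpl; repeat split; solve_rational.
Qed.

Lemma eqline_det_line_through b1 b2 b3 b4 (H12 : b1 <> b2) (H34 : b3 <> b4) :
  eqline_det (line_through H12) (line_through H34) = cross b1 b2 b3 b4.
Proof. unfold eqline_det, cross; simpl; ring. Qed.

Lemma rational_points_admissible (C : config) :
  (forall a, In a (cpoints C) -> rational_point a) ->
  (forall l, In l (clines C) -> rational_eqline l) ->
  ccurves C = nil ->
  admissible C rational_point.
Proof.
  intros Hpts Hlines Hcurves; split; [|split; [|split]].
  - intros x eps Heps; now apply rational_point_dense.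
  - exact Hpts.
  - intros b1 b2 b3 b4 p R1 R2 R3 R4 H12 H34 Hcross E12 E34.
    apply (eqline_intersection_rational (line_through H12) (line_through H34));
      try apply line_through_rational; try apply on_line2_through; auto.
    now rewrite eqline_det_line_through.
  - intros b1 b2 p R1 R2 H12 [[l [Hl Hiso]] | [g [Hg _]]];
      [|rewrite Hcurves in Hg; destruct Hg].
    apply (isolated_in_iff _ (fun q => on_eqline (line_through H12) q /\ on_eqline l q))
      in Hiso; [|intro q; now rewrite on_line2_through].
    apply (eqline_intersection_rational (line_through H12) l);
      [apply line_through_rational; auto | auto
      | exact (isolated_eqline_intersection_det _ _ p Hiso) | apply Hiso | apply Hiso].
Qed.

Lemma diag_line_rational : rational_eqline diag_line.
Proof.
  unfold rational_eqline; simpl; repeat split;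
    [apply (is_rational_IZR 1) | apply (is_rational_IZR (-1)) | apply (is_rational_IZR 0)].
Qed.

Theorem mainTheorem8 (F : list point) :
  (forall p, In p F ->
     is_rational (fst p) /\ is_rational (snd p) /\ (fst p)^2 + (snd p)^2 = 1) ->
  non_constructible (mkConfig F (diag_line :: nil) nil) (sqrt 2 / 2, sqrt 2 / 2) /\
  non_constructible (mkConfig F (diag_line :: nil) nil) (- (sqrt 2 / 2), - (sqrt 2 / 2)).
Proof.
  intros HF.
  assert (Hadm : admissible (mkConfig F (diag_line :: nil) nil) rational_point).
  { apply rational_points_admissible; simpl; [|intros l [<- | []] | reflexivity].
    - intros a Ha; destruct (HF a Ha) as (Hx & Hy & _); now split.
    - exact diag_line_rational. }
  split; exists rational_point; split; [exact Hadm | | exact Hadm |];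
    intros [Hx _]; simpl in Hx; apply half_sqrt2_irrational.
  - exact Hx.
  - rewrite <- (Ropp_involutive (sqrt 2 / 2)); now apply is_rational_opp.
Qed.
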